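(* In the biased controlled social learning model described in the context, for all $b_1,b_2\in[0,1]$ with $b_1\le b_2$, $V^*_B(b_1)\le V^*_B(b_2)$.
   Context: A binary state $\omega\in\{G,B\}$ is drawn once. Agents $i=1,2,\dots$ act in sequence; a planner chooses precision $q_i\in[0.5,1]$ and agent $i$ receives a private signal $s_i$ with $\mathbb{P}(s_i=\omega)=q_i$, conditionally independent given $\omega$. Let $y(b,q)=1+2bq-b-q$, $z(b,q)=b+q-2bq$. With public belief $b_i$, agent $i$ takes $a_i=s_i$ if $1-q_i\le b_i\le q_i$, $G$ if $b_i>q_i$, $B$ if $b_i<1-q_i$; the public belief becomes $\frac{q_ib_i}{y(b_i,q_i)}$ (if $s_i=G$) or $\frac{(1-q_i)b_i}{z(b_i,q_i)}$ (if $s_i=B$) when $1-q_i\le b_i\le q_i$, and stays $b_i$ otherwise. The biased planner (who wants action $G$) has baseline $p\in[0.5,1)$, cost $\beta:[0,1]\to[0,\infty)$ non-negative, increasing, continuous, concave with $\beta(0)=0$, $C>0$, and instantaneous reward $r_B(b,q)=-\beta(|q-p|)-C\,\mathbb{P}(a_i=B\mid b,q)$. Policies are deterministic Markov maps $\pi:[0,1]\to[0.5,1]$; for $\delta\in[0,1)$, $V^\pi_B(b)=\mathbb{E}[\sum_{i\ge1}\delta^{i-1}r_B(b_i,\pi(b_i))\mid b_1=b]$ and $V^*_B=\sup_\pi V^\pi_B$. *)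

From Stdlib Require Import Reals.
From Coquelicot Require Export Coquelicot.
Open Scope R_scope.

(* y(b,q) = P(s = G | public belief b, precision q); z(b,q) = P(s = B | b, q) *)
Definition yf (b q : R) : R := 1 + 2*b*q - b - q.
Definition zf (b q : R) : R := b + q - 2*b*q.

Definition follows (b q : R) : bool :=
  if Rle_dec (1 - q) b then (if Rle_dec b q then true else false) else false.

(* next public belief after signal s (true = G, false = B) *)
Definition next_belief (b q : R) (s : bool) : R :=
  if follows b q then
    (if s then q * b / yf b q else (1 - q) * b / zf b q)
  else b.

(* P(a_i = B | b, q) *)
Definition probB (b q : R) : R :=
  if Rlt_dec q b then 0
  else if Rlt_dec b (1 - q) then 1
  else zf b q.

Definition rB (beta : R -> R) (p C : R) (b q : R) : R :=
  - beta (Rabs (q - p)) - C * probB b q.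

Definition admissible (pi : R -> R) : Prop :=
  forall b, 0 <= b <= 1 -> 1/2 <= pi b <= 1.

(* n-step discounted expected reward, conditional on the true state omega
   (true = G, false = B): signals are independent with P(s_i = omega) = q_i. *)
Fixpoint Wcond (beta : R -> R) (p C delta : R) (pi : R -> R)
    (omega : bool) (n : nat) (b : R) : R :=
  match n with
  | O => 0
  | S m =>
      let q := pi b in
      let pG := if omega then q else 1 - q in
      rB beta p C b q
      + delta * (pG * Wcond beta p C delta pi omega m (next_belief b q true)
                 + (1 - pG) * Wcond beta p C delta pi omega m (next_belief b q false))
  end.

(* E[ sum_{i=1}^{n} delta^(i-1) r_B(b_i, pi b_i) | b_1 = b ], omega ~ Bernoulli(b) *)
Definition Wn (beta : R -> R) (p C delta : R) (pi : R -> R) (n : nat) (b : R) : R :=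
  b * Wcond beta p C delta pi true n b + (1 - b) * Wcond beta p C delta pi false n b.

Definition VB (beta : R -> R) (p C delta : R) (pi : R -> R) (b : R) : R :=
  Lim_seq (fun n => Wn beta p C delta pi n b).

Definition VBstar (beta : R -> R) (p C delta : R) (b : R) : Rbar :=
  Lub_Rbar (fun v => exists pi, admissible pi /\ v = VB beta p C delta pi b).

(* V*_B is the fixed point V of the Bellman operator. Value iteration from 0 converges because
   the operator is monotone and a delta-contraction; the value of a stationary policy is the fixed
   point of its own operator of the same kind, hence lies below V, and policies choosing
   near-optimal precisions come within any eps of V.
   V is nondecreasing because its largest drop over pairs b1 <= b2 contracts by the factor delta:
   a precision q used at b1 is answered at b2 by q itself, by b2 once b2 has passed q, or by p
   (which ends all cost) once b2 has passed p, each time with no larger cost and with posteriors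
   dominating in the sense of a monotone coupling; herding on B at b1 is dominated by using q
   forever from b2. *)

From Stdlib Require Import Reals Lra Psatz Classical ClassicalEpsilon.
From Coquelicot Require Import Coquelicot.
Open Scope R_scope.

Lemma le_of_geometric_slack (d L a b : R) :
  0 <= d < 1 -> (forall k, a <= b + L * d ^ k) -> a <= b.
Proof.
  intros Hd H.
  assert (Hlim : is_lim_seq (fun k => b + L * d ^ k) (b + L * 0)).
  { apply is_lim_seq_plus'; [apply is_lim_seq_const|].
    apply (is_lim_seq_scal_l _ L 0), is_lim_seq_geom.
    rewrite Rabs_pos_eq; lra. }
  rewrite Rmult_0_r, Rplus_0_r in Hlim.
  exact (is_lim_seq_le _ _ a b H (is_lim_seq_const a) Hlim).
Qed.

(* The bounds c_k = l + (K - l) d^k, with l = e / (1 - d), satisfy c_(k+1) = d c_k + e. *)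
Lemma le_of_contraction {X : Type} (D : X -> Prop) (h : X -> R) (d e K : R) :
  0 <= d < 1 ->
  (forall x, D x -> h x <= K) ->
  (forall c, (forall x, D x -> h x <= c) -> forall x, D x -> h x <= d * c + e) ->
  forall x, D x -> h x <= e / (1 - d).
Proof.
  intros Hd HK Hstep x Hx.
  set (l := e / (1 - d)).
  assert (Hk : forall k y, D y -> h y <= l + (K - l) * d ^ k).
  { induction k as [|k IH]; intros y Hy.
    - specialize (HK y Hy). simpl. lra.
    - replace (l + (K - l) * d ^ S k) with (d * (l + (K - l) * d ^ k) + e)
        by (unfold l; simpl; field; lra).
      exact (Hstep _ IH y Hy). }
  apply (le_of_geometric_slack d (K - l)); auto.
Qed.

Lemma Rdiv_le_Rdiv_cross (a1 c1 a2 c2 : R) :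
  0 < c1 -> 0 < c2 -> a1 * c2 <= a2 * c1 -> a1 / c1 <= a2 / c2.
Proof.
  intros H1 H2 H. apply Rle_div_l; [lra|].
  replace (a2 / c2 * c1) with (a2 * c1 / c2) by (field; lra).
  apply Rle_div_r; lra.
Qed.

Definition nonpos01 (f : R -> R) : Prop := forall x, 0 <= x <= 1 -> f x <= 0.

(* Shared by the Bellman operator and the evaluation operator of a fixed policy; [vi_shift] is
   monotonicity and delta-contraction at once. *)
Record value_iteration (Op : (R -> R) -> R -> R) (delta M : R) (u : nat -> R -> R) : Prop := {
  vi_discount : 0 <= delta < 1;
  vi_shift : forall f g e, nonpos01 f -> nonpos01 g ->
    (forall x, 0 <= x <= 1 -> f x <= g x + e) ->
    forall x, 0 <= x <= 1 -> Op f x <= Op g x + delta * e;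
  vi_zero : forall x, 0 <= x <= 1 -> - M <= Op (fun _ => 0) x <= 0;
  vi_init : forall x, 0 <= x <= 1 -> u O x = 0;
  vi_step : forall n x, 0 <= x <= 1 -> u (S n) x = Op (u n) x }.

Arguments vi_discount {Op delta M u}.
Arguments vi_shift {Op delta M u}.
Arguments vi_zero {Op delta M u}.
Arguments vi_init {Op delta M u}.
Arguments vi_step {Op delta M u}.

Lemma nonpos01_zero : nonpos01 (fun _ => 0).
Proof. intros x _; lra. Qed.

Definition ulim (u : nat -> R -> R) (x : R) : R := real (Lim_seq (fun n => u n x)).

Section ValueIteration.
Context {Op : (R -> R) -> R -> R} {delta M : R} {u : nat -> R -> R}.
Hypothesis VI : value_iteration Op delta M u.

Let Hdelta := vi_discount VI.
Let K := M / (1 - delta).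

Lemma vi_nonpos n : nonpos01 (u n).
Proof.
  induction n as [|n IH]; intros x Hx.
  - rewrite (vi_init VI x Hx). lra.
  - rewrite (vi_step VI n x Hx).
    pose proof (vi_shift VI (u n) (fun _ => 0) 0 IH nonpos01_zero
      ltac:(intros y Hy; specialize (IH y Hy); lra) x Hx).
    pose proof (vi_zero VI x Hx). lra.
Qed.

Lemma vi_bound_nonneg : 0 <= K.
Proof.
  pose proof (vi_zero VI 0 ltac:(lra)).
  apply Rdiv_le_0_compat; lra.
Qed.

Lemma vi_lower n x : 0 <= x <= 1 -> - K <= u n x.
Proof.
  revert x; induction n as [|n IH]; intros x Hx.
  - rewrite (vi_init VI x Hx). pose proof vi_bound_nonneg. lra.
  - rewrite (vi_step VI n x Hx).
    pose proof (vi_shift VI (fun _ => 0) (u n) K nonpos01_zero (vi_nonpos n)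
      ltac:(intros y Hy; specialize (IH y Hy); lra) x Hx).
    pose proof (vi_zero VI x Hx).
    replace (- K) with (- M - delta * K) by (unfold K; field; lra). lra.
Qed.

Lemma vi_decr n x : 0 <= x <= 1 -> u (S n) x <= u n x.
Proof.
  revert x; induction n as [|n IH]; intros x Hx.
  - rewrite (vi_init VI x Hx). exact (vi_nonpos 1 x Hx).
  - rewrite !(vi_step VI _ x Hx).
    pose proof (vi_shift VI (u (S n)) (u n) 0 (vi_nonpos _) (vi_nonpos _)
      ltac:(intros y Hy; specialize (IH y Hy); lra) x Hx). lra.
Qed.

Lemma vi_tail n m x : 0 <= x <= 1 -> u n x <= u (m + n) x + K * delta ^ n.
Proof.
  revert x; induction n as [|n IH]; intros x Hx.
  - rewrite (vi_init VI x Hx). pose proof (vi_lower (m + 0) x Hx). simpl. lra.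
  - rewrite Nat.add_succ_r, !(vi_step VI _ x Hx).
    pose proof (vi_shift VI (u n) (u (m + n)) (K * delta ^ n)
      (vi_nonpos _) (vi_nonpos _) IH x Hx). simpl. lra.
Qed.

Lemma vi_decr_add n m x : 0 <= x <= 1 -> u (m + n) x <= u n x.
Proof.
  intros Hx; induction m as [|m IH]; [simpl; lra|].
  pose proof (vi_decr (m + n) x Hx). simpl. lra.
Qed.

Lemma is_lim_seq_vi x : 0 <= x <= 1 -> is_lim_seq (fun n => u n x) (ulim u x).
Proof.
  intros Hx.
  assert (Hlim := Lim_seq_correct _ (ex_lim_seq_decr _ (fun n => vi_decr n x Hx))).
  unfold ulim. destruct (Lim_seq (fun n => u n x)) as [l| |] eqn:E; [exact Hlim| |].
  - exfalso. exact (is_lim_seq_le _ _ _ _ (fun n => vi_nonpos n x Hx) Hlim (is_lim_seq_const 0)).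
  - exfalso. exact (is_lim_seq_le _ _ _ _ (fun n => vi_lower n x Hx) (is_lim_seq_const _) Hlim).
Qed.

Lemma ulim_between n x : 0 <= x <= 1 -> ulim u x <= u n x <= ulim u x + K * delta ^ n.
Proof.
  intros Hx.
  pose proof (proj1 (is_lim_seq_incr_n _ n _) (is_lim_seq_vi x Hx)) as Hlim.
  split.
  - exact (is_lim_seq_le _ _ _ _ (fun m => vi_decr_add n m x Hx) Hlim (is_lim_seq_const _)).
  - apply (is_lim_seq_le (fun _ => u n x) (fun m => u (m + n)%nat x + K * delta ^ n)
      (u n x) (ulim u x + K * delta ^ n) (fun m => vi_tail n m x Hx) (is_lim_seq_const _)).
    apply is_lim_seq_plus'; [exact Hlim | apply is_lim_seq_const].
Qed.

Lemma ulim_nonpos : nonpos01 (ulim u).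
Proof. intros x Hx. pose proof (ulim_between 0 x Hx). pose proof (vi_nonpos 0 x Hx). lra. Qed.

Lemma ulim_lower x : 0 <= x <= 1 -> - K <= ulim u x.
Proof.
  intros Hx.
  exact (is_lim_seq_le _ _ _ _ (fun n => vi_lower n x Hx) (is_lim_seq_const _)
           (is_lim_seq_vi x Hx)).
Qed.

Lemma ulim_fixed x : 0 <= x <= 1 -> Op (ulim u) x = ulim u x.
Proof.
  intros Hx. apply Rle_antisym.
  - apply (le_of_geometric_slack delta (K * delta)); [exact Hdelta|]. intros n.
    pose proof (vi_shift VI (ulim u) (u n) 0 ulim_nonpos (vi_nonpos n)
      ltac:(intros y Hy; pose proof (ulim_between n y Hy); lra) x Hx) as Hshift.
    rewrite <- (vi_step VI n x Hx) in Hshift.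
    pose proof (ulim_between (S n) x Hx). simpl in *. lra.
  - apply (le_of_geometric_slack delta (K * delta)); [exact Hdelta|]. intros n.
    pose proof (vi_shift VI (u n) (ulim u) (K * delta ^ n) (vi_nonpos n) ulim_nonpos
      ltac:(intros y Hy; pose proof (ulim_between n y Hy); lra) x Hx) as Hshift.
    rewrite <- (vi_step VI n x Hx) in Hshift.
    pose proof (ulim_between (S n) x Hx). simpl in *. lra.
Qed.

Lemma le_ulim g e : nonpos01 g -> (forall x, 0 <= x <= 1 -> g x <= Op g x + e) ->
  forall x, 0 <= x <= 1 -> g x <= ulim u x + e / (1 - delta).
Proof.
  intros Hg Hsub.
  enough (H : forall x, 0 <= x <= 1 -> g x - ulim u x <= e / (1 - delta))
    by (intros x Hx; specialize (H x Hx); lra).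
  apply (le_of_contraction _ _ delta e K Hdelta).
  - intros x Hx. pose proof (Hg x Hx). pose proof (ulim_lower x Hx). lra.
  - intros c Hc x Hx.
    pose proof (vi_shift VI g (ulim u) c Hg ulim_nonpos
      ltac:(intros y Hy; specialize (Hc y Hy); lra) x Hx) as Hshift.
    rewrite (ulim_fixed x Hx) in Hshift. specialize (Hsub x Hx). lra.
Qed.

End ValueIteration.

(* Since [x / 0 = 0], [up_belief 0 q] and [down_belief b 1] vanish even where [yf] or [zf] does. *)
Definition up_belief (b q : R) : R := q * b / yf b q.
Definition down_belief (b q : R) : R := (1 - q) * b / zf b q.

Lemma yf_add_zf b q : yf b q + zf b q = 1.
Proof. unfold yf, zf; ring. Qed.

Lemma yf_nonneg b q : 0 <= b <= 1 -> 0 <= q <= 1 -> 0 <= yf b q.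
Proof. intros. unfold yf. nra. Qed.

Lemma zf_nonneg b q : 0 <= b <= 1 -> 0 <= q <= 1 -> 0 <= zf b q.
Proof. intros. unfold zf. nra. Qed.

Lemma zf_le_mono b1 q1 b2 q2 : b1 <= b2 -> 1/2 <= q1 <= q2 -> q1 = q2 \/ 1/2 <= b2 ->
  zf b2 q2 <= zf b1 q1.
Proof.
  intros Hb Hq Hor. unfold zf.
  assert (0 <= (b2 - b1) * (2 * q1 - 1)) by (apply Rmult_le_pos; lra).
  destruct Hor as [<-|Hb2]; [nra|].
  assert (0 <= (q2 - q1) * (2 * b2 - 1)) by (apply Rmult_le_pos; lra). nra.
Qed.

Lemma up_belief_0 q : up_belief 0 q = 0.
Proof. unfold up_belief. rewrite Rmult_0_r. apply Rdiv_0_l. Qed.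

Lemma down_belief_1 b : down_belief b 1 = 0.
Proof. unfold down_belief. rewrite Rminus_diag, Rmult_0_l. apply Rdiv_0_l. Qed.

Lemma yf_pos b q : 0 < b <= 1 -> 1/2 <= q <= 1 -> 0 < yf b q.
Proof. intros. unfold yf. nra. Qed.

Lemma zf_pos b q : 0 <= b <= 1 -> 1/2 <= q < 1 -> 0 < zf b q.
Proof. intros. unfold zf. nra. Qed.

Lemma yf_mul_up_belief b q : 0 <= b <= 1 -> 1/2 <= q <= 1 -> yf b q * up_belief b q = q * b.
Proof.
  intros Hb Hq. destruct (Req_dec b 0) as [->|Hb0].
  - rewrite up_belief_0. ring.
  - pose proof (yf_pos b q ltac:(lra) Hq). unfold up_belief. field. lra.
Qed.

Lemma zf_mul_down_belief b q : 0 <= b <= 1 -> 1/2 <= q <= 1 ->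
  zf b q * down_belief b q = (1 - q) * b.
Proof.
  intros Hb Hq. destruct (Req_dec q 1) as [->|Hq1].
  - rewrite down_belief_1. ring.
  - pose proof (zf_pos b q Hb ltac:(lra)). unfold down_belief. field. lra.
Qed.

Lemma up_belief_bounds b q : 0 <= b <= 1 -> 1/2 <= q <= 1 -> b <= up_belief b q <= 1.
Proof.
  intros Hb Hq. destruct (Req_dec b 0) as [->|Hb0].
  - rewrite up_belief_0. lra.
  - pose proof (yf_pos b q ltac:(lra) Hq). unfold up_belief, yf in *. split.
    + apply Rle_div_r; [lra|].
      assert (0 <= b * (1 - b) * (2 * q - 1)) by (repeat apply Rmult_le_pos; lra). nra.
    + apply Rle_div_l; [lra|].
      assert (0 <= (1 - b) * (1 - q)) by (apply Rmult_le_pos; lra). nra.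
Qed.

Lemma down_belief_bounds b q : 0 <= b <= 1 -> 1/2 <= q <= 1 -> 0 <= down_belief b q <= b.
Proof.
  intros Hb Hq. destruct (Req_dec q 1) as [->|Hq1].
  - rewrite down_belief_1. lra.
  - pose proof (zf_pos b q Hb ltac:(lra)). unfold down_belief, zf in *. split.
    + apply Rdiv_le_0_compat; nra.
    + apply Rle_div_l; [lra|].
      assert (0 <= b * (1 - b) * (2 * q - 1)) by (repeat apply Rmult_le_pos; lra). nra.
Qed.

Lemma up_belief_mono b1 q1 b2 q2 : 0 <= b1 <= b2 -> b2 <= 1 -> 1/2 <= q1 <= q2 -> q2 <= 1 ->
  up_belief b1 q1 <= up_belief b2 q2.
Proof.
  intros Hb Hb2 Hq Hq2. destruct (Req_dec b1 0) as [->|Hb0].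
  - rewrite up_belief_0. pose proof (up_belief_bounds b2 q2). lra.
  - pose proof (yf_pos b1 q1 ltac:(lra) ltac:(lra)).
    pose proof (yf_pos b1 q2 ltac:(lra) ltac:(lra)).
    pose proof (yf_pos b2 q2 ltac:(lra) ltac:(lra)).
    apply Rle_trans with (up_belief b1 q2); apply Rdiv_le_Rdiv_cross; auto; unfold yf.
    + assert (0 <= b1 * (1 - b1) * (q2 - q1)) by (repeat apply Rmult_le_pos; lra). nra.
    + assert (0 <= q2 * (1 - q2) * (b2 - b1)) by (repeat apply Rmult_le_pos; lra). nra.
Qed.

Lemma down_belief_mono b1 b2 q : 0 <= b1 <= b2 -> b2 <= 1 -> 1/2 <= q <= 1 ->
  down_belief b1 q <= down_belief b2 q.
Proof.
  intros Hb Hb2 Hq. destruct (Req_dec q 1) as [->|Hq1].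
  - rewrite !down_belief_1. lra.
  - pose proof (zf_pos b1 q ltac:(lra) ltac:(lra)). pose proof (zf_pos b2 q ltac:(lra) ltac:(lra)).
    apply Rdiv_le_Rdiv_cross; auto. unfold zf.
    assert (0 <= (1 - q) * q * (b2 - b1)) by (repeat apply Rmult_le_pos; lra). nra.
Qed.

Lemma down_belief_diag x : 1/2 <= x < 1 -> down_belief x x = 1/2.
Proof. intros Hx. unfold down_belief, zf. field. nra. Qed.

Lemma follows_spec b q : follows b q = true <-> 1 - q <= b <= q.
Proof.
  unfold follows. destruct (Rle_dec (1 - q) b), (Rle_dec b q); split; intros; try lra; easy.
Qed.

Lemma next_belief_follow b q s : 1 - q <= b <= q ->
  next_belief b q s = if s then up_belief b q else down_belief b q.
Proof. intros H. apply follows_spec in H. unfold next_belief. now rewrite H. Qed.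

Lemma follows_above b q : q < b -> follows b q = false.
Proof. intros H. destruct (follows b q) eqn:F; [apply follows_spec in F; lra | reflexivity]. Qed.

Lemma next_belief_herd b q s : follows b q = false -> next_belief b q s = b.
Proof. intros H. unfold next_belief. now rewrite H. Qed.

Lemma next_belief_bounds b q s : 0 <= b <= 1 -> 1/2 <= q <= 1 -> 0 <= next_belief b q s <= 1.
Proof.
  intros Hb Hq. unfold next_belief.
  pose proof (up_belief_bounds b q Hb Hq). pose proof (down_belief_bounds b q Hb Hq).
  destruct (follows b q), s; unfold up_belief, down_belief in *; lra.
Qed.

Lemma probB_follow b q : 1 - q <= b <= q -> probB b q = zf b q.
Proof.
  intros. unfold probB. destruct (Rlt_dec q b); [lra|]. destruct (Rlt_dec b (1 - q)); [lra|easy].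
Qed.

Lemma probB_above b q : q < b -> probB b q = 0.
Proof. intros. unfold probB. destruct (Rlt_dec q b); [easy|lra]. Qed.

Lemma probB_below b q : 1/2 <= q -> b < 1 - q -> probB b q = 1.
Proof.
  intros. unfold probB. destruct (Rlt_dec q b); [lra|]. destruct (Rlt_dec b (1 - q)); [easy|lra].
Qed.

Lemma probB_bounds b q : 0 <= b <= 1 -> 1/2 <= q <= 1 -> 0 <= probB b q <= 1.
Proof.
  intros. unfold probB. destruct (Rlt_dec q b); [lra|]. destruct (Rlt_dec b (1 - q)); [lra|].
  pose proof (yf_nonneg b q). pose proof (zf_nonneg b q). pose proof (yf_add_zf b q). lra.
Qed.

Section Model.
Variables (beta : R -> R) (p C delta : R).
Hypothesis Hp : 1/2 <= p < 1.
Hypothesis HC : 0 <= C.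
Hypothesis Hdelta : 0 <= delta < 1.
Hypothesis Hbeta0 : beta 0 = 0.
Hypothesis Hbeta_nonneg : forall x, 0 <= x <= 1 -> 0 <= beta x.
Hypothesis Hbeta_incr : forall x y, 0 <= x <= 1 -> 0 <= y <= 1 -> x <= y -> beta x <= beta y.

Definition cost_bound : R := beta (1/2) + C.

Lemma beta_dev_bounds q : 1/2 <= q <= 1 -> 0 <= beta (Rabs (q - p)) <= beta (1/2).
Proof.
  intros Hq.
  assert (0 <= Rabs (q - p) <= 1/2) by (split; [apply Rabs_pos | apply Rabs_le; lra]).
  split; [apply Hbeta_nonneg | apply Hbeta_incr]; lra.
Qed.

Lemma rB_bounds b q : 0 <= b <= 1 -> 1/2 <= q <= 1 -> - cost_bound <= rB beta p C b q <= 0.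
Proof.
  intros Hb Hq. unfold rB, cost_bound.
  pose proof (beta_dev_bounds q Hq). pose proof (probB_bounds b q Hb Hq). nra.
Qed.

Definition Qval (f : R -> R) (b q : R) : R :=
  rB beta p C b q
  + delta * (yf b q * f (next_belief b q true) + zf b q * f (next_belief b q false)).

Lemma Qval_follow f b q : 1 - q <= b <= q ->
  Qval f b q = - beta (Rabs (q - p)) - C * zf b q
               + delta * (yf b q * f (up_belief b q) + zf b q * f (down_belief b q)).
Proof.
  intros H. unfold Qval, rB. rewrite probB_follow, !next_belief_follow by exact H. reflexivity.
Qed.

Lemma Qval_herd f b q : follows b q = false -> Qval f b q = rB beta p C b q + delta * f b.
Proof.
  intros H. unfold Qval. rewrite !next_belief_herd by exact H.
  pose proof (yf_add_zf b q). replace (zf b q) with (1 - yf b q) by lra. ring.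
Qed.

Lemma Qval_const a b q : Qval (fun _ => a) b q = rB beta p C b q + delta * a.
Proof.
  unfold Qval. pose proof (yf_add_zf b q). replace (zf b q) with (1 - yf b q) by lra. ring.
Qed.

Lemma Qval_shift f g e b q : 0 <= b <= 1 -> 1/2 <= q <= 1 ->
  (forall x, 0 <= x <= 1 -> f x <= g x + e) -> Qval f b q <= Qval g b q + delta * e.
Proof.
  intros Hb Hq H. unfold Qval.
  set (bu := next_belief b q true). set (bd := next_belief b q false).
  assert (Hu : yf b q * (f bu - g bu - e) <= 0).
  { pose proof (yf_nonneg b q Hb ltac:(lra)).
    pose proof (H bu (next_belief_bounds b q true Hb Hq)). nra. }
  assert (Hd : zf b q * (f bd - g bd - e) <= 0).
  { pose proof (zf_nonneg b q Hb ltac:(lra)).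
    pose proof (H bd (next_belief_bounds b q false Hb Hq)). nra. }
  assert (Hmix : yf b q * f bu + zf b q * f bd <= yf b q * g bu + zf b q * g bd + e).
  { pose proof (yf_add_zf b q). replace (zf b q) with (1 - yf b q) in * by lra. lra. }
  pose proof (Rmult_le_compat_l delta _ _ (proj1 Hdelta) Hmix). lra.
Qed.

Lemma Qval_nonpos f b q : nonpos01 f -> 0 <= b <= 1 -> 1/2 <= q <= 1 -> Qval f b q <= 0.
Proof.
  intros Hf Hb Hq.
  pose proof (Qval_shift f (fun _ => 0) 0 b q Hb Hq
    ltac:(intros x Hx; specialize (Hf x Hx); lra)) as Hshift.
  rewrite Qval_const in Hshift. pose proof (rB_bounds b q Hb Hq). lra.
Qed.

Definition bellman (f : R -> R) (b : R) : R :=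
  real (Lub_Rbar (fun v => exists q, 1/2 <= q <= 1 /\ v = Qval f b q)).

Lemma bellman_spec f b : nonpos01 f -> 0 <= b <= 1 ->
  (forall q, 1/2 <= q <= 1 -> Qval f b q <= bellman f b) /\
  (forall c, (forall q, 1/2 <= q <= 1 -> Qval f b q <= c) -> bellman f b <= c).
Proof.
  intros Hf Hb. unfold bellman.
  set (E := fun v => exists q, 1/2 <= q <= 1 /\ v = Qval f b q).
  destruct (Lub_Rbar_correct E) as [Hub Hleast].
  assert (Hbound : forall c, (forall q, 1/2 <= q <= 1 -> Qval f b q <= c) -> is_ub_Rbar E c)
    by (intros c Hc v [q [Hq ->]]; exact (Hc q Hq)).
  assert (HE : E (Qval f b 1)) by (exists 1; split; [lra | reflexivity]).
  destruct (Lub_Rbar E) as [s| |]; simpl in *.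
  - split.
    + intros q Hq. apply (Hub _ (ex_intro _ q (conj Hq eq_refl))).
    + intros c Hc. exact (Hleast c (Hbound c Hc)).
  - exfalso. apply (Hleast 0), Hbound. intros q Hq. exact (Qval_nonpos f b q Hf Hb Hq).
  - exfalso. exact (Hub _ HE).
Qed.

Lemma bellman_approx f b eta : nonpos01 f -> 0 <= b <= 1 -> 0 < eta ->
  exists q, 1/2 <= q <= 1 /\ bellman f b - eta <= Qval f b q.
Proof.
  intros Hf Hb Heta. apply NNPP. intros Hnone.
  enough (bellman f b <= bellman f b - eta) by lra.
  apply (bellman_spec f b Hf Hb). intros q Hq.
  apply Rnot_lt_le. intros Hlt. apply Hnone. exists q. split; [exact Hq | lra].
Qed.

Definition value_iterates (n : nat) : R -> R := Nat.iter n bellman (fun _ => 0).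

Definition Vopt : R -> R := ulim value_iterates.

Lemma bellman_value_iteration : value_iteration bellman delta cost_bound value_iterates.
Proof.
  split; try easy.
  - intros f g e Hf Hg Hfg x Hx. apply (bellman_spec f x Hf Hx). intros q Hq.
    pose proof (Qval_shift f g e x q Hx Hq Hfg).
    pose proof (proj1 (bellman_spec g x Hg Hx) q Hq). lra.
  - intros x Hx. split.
    + pose proof (proj1 (bellman_spec _ x nonpos01_zero Hx) 1 ltac:(lra)) as H1.
      rewrite Qval_const in H1. pose proof (rB_bounds x 1 Hx ltac:(lra)). lra.
    + apply (bellman_spec _ x nonpos01_zero Hx). intros q Hq.
      exact (Qval_nonpos _ x q nonpos01_zero Hx Hq).
Qed.

Definition policy_op (pi : R -> R) (f : R -> R) (b : R) : R := Qval f b (pi b).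

Lemma Wn_step pi n b : 0 <= b <= 1 -> 1/2 <= pi b <= 1 ->
  Wn beta p C delta pi (S n) b = Qval (Wn beta p C delta pi n) b (pi b).
Proof.
  intros Hb Hq. unfold Wn, Qval. simpl.
  set (q := pi b) in *.
  set (WT := Wcond beta p C delta pi true n). set (WF := Wcond beta p C delta pi false n).
  pose proof (yf_add_zf b q).
  destruct (follows b q) eqn:F.
  - apply follows_spec in F. rewrite !next_belief_follow by exact F.
    change (q * b / yf b q) with (up_belief b q).
    change ((1 - q) * b / zf b q) with (down_belief b q).
    pose proof (yf_mul_up_belief b q Hb Hq). pose proof (zf_mul_down_belief b q Hb Hq).
    set (u := up_belief b q) in *. set (d := down_belief b q) in *.
    replace (yf b q * (u * WT u + (1 - u) * WF u) + zf b q * (d * WT d + (1 - d) * WF d))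
      with ((yf b q * u) * WT u + (yf b q - yf b q * u) * WF u
            + (zf b q * d) * WT d + (zf b q - zf b q * d) * WF d) by ring.
    rewrite H0, H1. replace (zf b q) with (1 - yf b q) by lra. unfold yf. ring.
  - rewrite !next_belief_herd by exact F. replace (zf b q) with (1 - yf b q) by lra. ring.
Qed.

Lemma policy_value_iteration pi : admissible pi ->
  value_iteration (policy_op pi) delta cost_bound (Wn beta p C delta pi).
Proof.
  intros Hpi. split; try easy.
  - intros f g e _ _ Hfg x Hx. exact (Qval_shift f g e x (pi x) Hx (Hpi x Hx) Hfg).
  - intros x Hx. unfold policy_op. rewrite Qval_const, Rmult_0_r, Rplus_0_r.
    exact (rB_bounds x (pi x) Hx (Hpi x Hx)).
  - intros x _. unfold Wn. simpl. ring.
  - intros n x Hx. exact (Wn_step pi n x Hx (Hpi x Hx)).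
Qed.

Lemma VB_le_Vopt pi b : admissible pi -> 0 <= b <= 1 -> VB beta p C delta pi b <= Vopt b.
Proof.
  intros Hpi Hb.
  pose proof (policy_value_iteration pi Hpi) as PV.
  change (VB beta p C delta pi b) with (ulim (Wn beta p C delta pi) b).
  assert (Hsub : forall x, 0 <= x <= 1 ->
            ulim (Wn beta p C delta pi) x <= bellman (ulim (Wn beta p C delta pi)) x + 0).
  { intros x Hx. rewrite <- (ulim_fixed PV x Hx) at 1.
    pose proof (proj1 (bellman_spec _ x (ulim_nonpos PV) Hx) (pi x) (Hpi x Hx)).
    unfold policy_op. lra. }
  pose proof (le_ulim bellman_value_iteration _ 0 (ulim_nonpos PV) Hsub b Hb) as Hle.
  rewrite Rdiv_0_l in Hle. fold Vopt in Hle. lra.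
Qed.

Lemma Vopt_fixed x : 0 <= x <= 1 -> bellman Vopt x = Vopt x.
Proof. exact (ulim_fixed bellman_value_iteration x). Qed.

Lemma Vopt_nonpos : nonpos01 Vopt.
Proof. exact (ulim_nonpos bellman_value_iteration). Qed.

Lemma Vopt_approx_by_policy b eta : 0 <= b <= 1 -> 0 < eta ->
  exists pi, admissible pi /\ Vopt b - eta <= VB beta p C delta pi b.
Proof.
  intros Hb Heta.
  assert (Hchoice : forall x, exists q, 1/2 <= q <= 1 /\
            (0 <= x <= 1 -> Vopt x <= Qval Vopt x q + eta * (1 - delta))).
  { intros x. destruct (classic (0 <= x <= 1)) as [Hx|Hx].
    - destruct (bellman_approx Vopt x (eta * (1 - delta)) Vopt_nonpos Hx ltac:(nra))
        as [q [Hq Hle]].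
      rewrite Vopt_fixed in Hle by exact Hx. exists q. split; [exact Hq | intros _; lra].
    - exists 1. split; [lra | contradiction]. }
  destruct (choice _ Hchoice) as [pi Hpi].
  assert (Hadm : admissible pi) by (intros x _; apply Hpi).
  exists pi. split; [exact Hadm|].
  pose proof (le_ulim (policy_value_iteration pi Hadm) Vopt (eta * (1 - delta)) Vopt_nonpos
                (fun x Hx => proj2 (Hpi x) Hx) b Hb) as Hle.
  replace (eta * (1 - delta) / (1 - delta)) with eta in Hle by (field; lra).
  change (VB beta p C delta pi b) with (ulim (Wn beta p C delta pi) b). lra.
Qed.

Lemma VBstar_eq_Vopt b : 0 <= b <= 1 -> VBstar beta p C delta b = Finite (Vopt b).
Proof.
  intros Hb. apply is_lub_Rbar_unique. split.
  - intros v [pi [Hpi ->]]. exact (VB_le_Vopt pi b Hpi Hb).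
  - intros l Hl. destruct l as [r| |]; simpl; auto.
    + apply Rnot_lt_le. intros Hlt.
      destruct (Vopt_approx_by_policy b ((Vopt b - r) / 2) Hb ltac:(lra)) as [pi [Hpi Hge]].
      specialize (Hl _ (ex_intro _ pi (conj Hpi eq_refl))). simpl in Hl. lra.
    + destruct (Vopt_approx_by_policy b 1 Hb ltac:(lra)) as [pi [Hpi _]].
      exact (Hl _ (ex_intro _ pi (conj Hpi eq_refl))).
Qed.

Lemma Qval_Vopt_le b q : 0 <= b <= 1 -> 1/2 <= q <= 1 -> Qval Vopt b q <= Vopt b.
Proof.
  intros Hb Hq. rewrite <- Vopt_fixed by exact Hb.
  exact (proj1 (bellman_spec _ b Vopt_nonpos Hb) q Hq).
Qed.

Lemma Vopt_le_of_Qval b c : 0 <= b <= 1 ->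
  (forall q, 1/2 <= q <= 1 -> Qval Vopt b q <= c) -> Vopt b <= c.
Proof.
  intros Hb Hc. rewrite <- Vopt_fixed by exact Hb.
  exact (proj2 (bellman_spec _ b Vopt_nonpos Hb) c Hc).
Qed.

(* With precision [p] above [p] nobody takes action B and the deviation cost is [beta 0 = 0]. *)
Lemma Vopt_nonneg_above_p b : p < b <= 1 -> 0 <= Vopt b.
Proof.
  intros Hb.
  pose proof (Qval_Vopt_le b p ltac:(lra) ltac:(lra)) as Hfix.
  rewrite Qval_herd in Hfix by (apply follows_above; lra).
  unfold rB in Hfix. rewrite probB_above, Rminus_diag, Rabs_R0, Hbeta0 in Hfix by lra. nra.
Qed.

Lemma Vopt_ge_stationary q x : 1/2 <= q <= 1 -> 0 <= x <= 1 ->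
  - (beta (Rabs (q - p)) + C) / (1 - delta) <= Vopt x.
Proof.
  intros Hq Hx. pose proof (beta_dev_bounds q Hq) as Hbq.
  set (g := - (beta (Rabs (q - p)) + C) / (1 - delta)).
  assert (Hg : g <= 0) by (apply Rle_div_l; lra).
  assert (Hsub : forall y, 0 <= y <= 1 -> g <= bellman (fun _ => g) y + 0).
  { intros y Hy.
    pose proof (proj1 (bellman_spec (fun _ => g) y (fun _ _ => Hg) Hy) q Hq) as Hq_le.
    rewrite Qval_const in Hq_le. unfold rB in Hq_le.
    pose proof (probB_bounds y q Hy Hq).
    replace g with (- beta (Rabs (q - p)) - C + delta * g) at 1 by (unfold g; field; lra).
    nra. }
  pose proof (le_ulim bellman_value_iteration (fun _ => g) 0 (fun _ _ => Hg) Hsub x Hx) as Hle.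
  rewrite Rdiv_0_l in Hle. fold Vopt in Hle. lra.
Qed.

Definition max_drop_le (f : R -> R) (c : R) : Prop :=
  forall x x', 0 <= x <= x' -> x' <= 1 -> f x - f x' <= c.

(* The monotone coupling of the two signal laws: the first up-signal event is contained in
   the second. *)
Lemma mixture_gap_le y1 y2 fu1 fd1 fu2 fd2 c : 0 <= y1 <= y2 -> y2 <= 1 ->
  fu1 - fu2 <= c -> fd1 - fd2 <= c -> fd1 - fu2 <= c ->
  y1 * fu1 + (1 - y1) * fd1 - (y2 * fu2 + (1 - y2) * fd2) <= c.
Proof.
  intros Hy Hy2 Hu Hd Hcross.
  replace (y1 * fu1 + (1 - y1) * fd1 - (y2 * fu2 + (1 - y2) * fd2))
    with (y1 * (fu1 - fu2) + (1 - y2) * (fd1 - fd2) + (y2 - y1) * (fd1 - fu2)) by ring.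
  nra.
Qed.

Lemma Qval_follow_coupling f c b1 q1 b2 q2 : max_drop_le f c ->
  0 <= b1 <= b2 -> b2 <= 1 -> 1/2 <= q1 <= 1 -> 1/2 <= q2 <= 1 ->
  1 - q1 <= b1 <= q1 -> 1 - q2 <= b2 <= q2 ->
  beta (Rabs (q2 - p)) <= beta (Rabs (q1 - p)) -> zf b2 q2 <= zf b1 q1 ->
  up_belief b1 q1 <= up_belief b2 q2 -> down_belief b1 q1 <= down_belief b2 q2 ->
  Qval f b1 q1 <= Qval f b2 q2 + delta * c.
Proof.
  intros Hc Hb Hb2 Hq1 Hq2 F1 F2 Hbeta Hz Hup Hdown.
  rewrite !Qval_follow by assumption.
  pose proof (up_belief_bounds b1 q1 ltac:(lra) Hq1).
  pose proof (up_belief_bounds b2 q2 ltac:(lra) Hq2).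
  pose proof (down_belief_bounds b1 q1 ltac:(lra) Hq1).
  pose proof (down_belief_bounds b2 q2 ltac:(lra) Hq2).
  pose proof (yf_add_zf b1 q1). pose proof (yf_add_zf b2 q2).
  pose proof (zf_nonneg b2 q2 ltac:(lra) ltac:(lra)).
  pose proof (yf_nonneg b1 q1 ltac:(lra) ltac:(lra)).
  assert (Hmix : yf b1 q1 * f (up_belief b1 q1) + zf b1 q1 * f (down_belief b1 q1)
                 - (yf b2 q2 * f (up_belief b2 q2) + zf b2 q2 * f (down_belief b2 q2)) <= c).
  { replace (zf b1 q1) with (1 - yf b1 q1) by lra. replace (zf b2 q2) with (1 - yf b2 q2) by lra.
    apply mixture_gap_le; try lra; apply Hc; lra. }
  pose proof (Rmult_le_compat_l delta _ _ (proj1 Hdelta) Hmix).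
  pose proof (Rmult_le_compat_l C _ _ HC Hz). lra.
Qed.

Lemma Qval_Vopt_follow_le c b1 b2 q : max_drop_le Vopt c ->
  0 <= b1 <= b2 -> b2 <= 1 -> 1/2 <= q <= 1 -> 1 - q <= b1 <= q ->
  Qval Vopt b1 q <= Vopt b2 + delta * c.
Proof.
  intros Hc Hb Hb2 Hq F1.
  pose proof (Hc 0 0 ltac:(lra) ltac:(lra)) as Hc0. rewrite Rminus_diag in Hc0.
  destruct (Rle_dec b2 q) as [Hb2q|Hqb2]; [|destruct (Rlt_le_dec p b2) as [Hpb2|Hb2p]].
  - pose proof (Qval_Vopt_le b2 q ltac:(lra) Hq).
    pose proof (Qval_follow_coupling Vopt c b1 q b2 q Hc Hb Hb2 Hq Hq F1 ltac:(lra) (Rle_refl _)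
      (zf_le_mono b1 q b2 q ltac:(lra) ltac:(lra) (or_introl eq_refl))
      (up_belief_mono b1 q b2 q Hb Hb2 ltac:(lra) ltac:(lra))
      (down_belief_mono b1 b2 q Hb Hb2 Hq)). lra.
  - pose proof (Qval_nonpos Vopt b1 q Vopt_nonpos ltac:(lra) Hq).
    pose proof (Vopt_nonneg_above_p b2 ltac:(lra)). nra.
  - (* q < b2 <= p: answer with precision b2, under which b2 still follows its signal *)
    assert (Hq2 : 1/2 <= b2 <= 1) by lra.
    assert (Hbeta : beta (Rabs (b2 - p)) <= beta (Rabs (q - p))).
    { rewrite !Rabs_left1 by lra. apply Hbeta_incr; lra. }
    assert (Hdown : down_belief b1 q <= down_belief b2 b2).
    { rewrite (down_belief_diag b2), <- (down_belief_diag q) by lra.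
      apply down_belief_mono; lra. }
    pose proof (Qval_Vopt_le b2 b2 ltac:(lra) Hq2).
    pose proof (Qval_follow_coupling Vopt c b1 q b2 b2 Hc Hb Hb2 Hq Hq2 F1 ltac:(lra) Hbeta
      (zf_le_mono b1 q b2 b2 ltac:(lra) ltac:(lra) (or_intror (proj1 Hq2)))
      (up_belief_mono b1 q b2 b2 Hb Hb2 ltac:(lra) ltac:(lra)) Hdown). lra.
Qed.

Lemma Qval_Vopt_herd_le c b1 b2 q : max_drop_le Vopt c ->
  0 <= b1 <= b2 -> b2 <= 1 -> 1/2 <= q <= 1 -> follows b1 q = false ->
  Qval Vopt b1 q <= Vopt b2 + delta * c.
Proof.
  intros Hc Hb Hb2 Hq F1.
  pose proof (Hc b1 b2 Hb Hb2) as Hgap.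
  pose proof (Rmult_le_compat_l delta _ _ (proj1 Hdelta) Hgap).
  rewrite Qval_herd by exact F1. unfold rB.
  destruct (Rlt_dec b1 (1 - q)) as [Hlow|Hnlow].
  - (* herding on B at b1 costs no less than keeping [q] forever from b2 *)
    rewrite probB_below by lra.
    pose proof (Vopt_ge_stationary q b2 Hq ltac:(lra)) as Hstat.
    apply Rle_div_l in Hstat; [lra | lra].
  - assert (Hhigh : q < b1).
    { apply Rnot_le_lt. intros Hle.
      assert (follows b1 q = true) by (apply follows_spec; lra). congruence. }
    pose proof (Qval_Vopt_le b2 q ltac:(lra) Hq) as H2.
    rewrite Qval_herd in H2 by (apply follows_above; lra). unfold rB in H2.
    rewrite probB_above in * by lra. lra.
Qed.

Lemma Vopt_max_drop_contract c : max_drop_le Vopt c -> max_drop_le Vopt (delta * c).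
Proof.
  intros Hc b1 b2 Hb Hb2.
  enough (Vopt b1 <= Vopt b2 + delta * c) by lra.
  apply Vopt_le_of_Qval; [lra|]. intros q Hq.
  destruct (follows b1 q) eqn:F1.
  - apply follows_spec in F1. exact (Qval_Vopt_follow_le c b1 b2 q Hc Hb Hb2 Hq F1).
  - exact (Qval_Vopt_herd_le c b1 b2 q Hc Hb Hb2 Hq F1).
Qed.

Lemma Vopt_mono b1 b2 : 0 <= b1 <= b2 -> b2 <= 1 -> Vopt b1 <= Vopt b2.
Proof.
  intros Hb Hb2.
  set (D := fun z : R * R => 0 <= fst z <= snd z /\ snd z <= 1).
  set (gap := fun z : R * R => Vopt (fst z) - Vopt (snd z)).
  assert (Hbound : forall z, D z -> gap z <= cost_bound / (1 - delta)).
  { intros [x x'] [Hx Hx']. unfold gap; simpl in *.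
    pose proof (Vopt_nonpos x ltac:(lra)).
    pose proof (ulim_lower bellman_value_iteration x' ltac:(lra)). unfold Vopt in *. lra. }
  assert (Hstep : forall c, (forall z, D z -> gap z <= c) ->
                    forall z, D z -> gap z <= delta * c + 0).
  { intros c Hc [x x'] [Hx Hx']. rewrite Rplus_0_r.
    apply (Vopt_max_drop_contract c); [|exact Hx|exact Hx'].
    intros y y' Hy Hy'. exact (Hc (y, y') (conj Hy Hy')). }
  pose proof (le_of_contraction D gap delta 0 _ Hdelta Hbound Hstep (b1, b2) (conj Hb Hb2))
    as Hle.
  unfold gap in Hle; simpl in Hle. rewrite Rdiv_0_l in Hle. lra.
Qed.

End Model.

Theorem lemma15
  (beta : R -> R) (p C delta : R)
  (Hp : 1/2 <= p < 1)
  (HC : 0 < C)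
  (Hdelta : 0 <= delta < 1)
  (Hbeta0 : beta 0 = 0)
  (Hbeta_nonneg : forall x, 0 <= x <= 1 -> 0 <= beta x)
  (Hbeta_incr : forall x y, 0 <= x <= 1 -> 0 <= y <= 1 -> x <= y -> beta x <= beta y)
  (Hbeta_cont : forall x, 0 <= x <= 1 -> forall eps, 0 < eps ->
      exists d, 0 < d /\ forall y, 0 <= y <= 1 -> Rabs (y - x) < d ->
        Rabs (beta y - beta x) < eps)
  (Hbeta_conc : forall x y t, 0 <= x <= 1 -> 0 <= y <= 1 -> 0 <= t <= 1 ->
      t * beta x + (1 - t) * beta y <= beta (t * x + (1 - t) * y))
  (b1 b2 : R) (Hb1 : 0 <= b1 <= 1) (Hb2 : 0 <= b2 <= 1) (H12 : b1 <= b2) :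
  Rbar_le (VBstar beta p C delta b1) (VBstar beta p C delta b2).
Proof.
  assert (HC' : 0 <= C) by lra.
  rewrite !(VBstar_eq_Vopt beta p C delta Hp HC' Hdelta) by assumption.
  exact (Vopt_mono beta p C delta Hp HC' Hdelta Hbeta0 Hbeta_nonneg Hbeta_incr b1 b2
           ltac:(lra) ltac:(lra)).
Qed.
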